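(* Let $n$, $m$ and $d$ be integers with $n\geq 5$, $m\geq 5$ and $d\geq 3$. Let $G\in T_{n,m}$, and let $v$ be a vertex of $G$ of degree $1$ whose unique neighbor is the terminal $s$. If $G-sv$ is not complete, then there exists $H\in T_{n,m}$ that is $d$-stronger than $G$.
   Context: All graphs are finite, simple and undirected. A two-terminal graph is a graph $G$ together with two distinguished vertices $s,t$ (the terminals). $T_{n,m}$ denotes the set of all pairwise nonisomorphic (with isomorphisms preserving the set of terminals) two-terminal graphs with $n$ vertices and $m$ edges. A two-terminal graph is called complete if the connected component containing both terminals is a complete graph. $G-sv$ is the two-terminal graph obtained from $G$ by deleting the edge $sv$. For a positive integer $d$, a $d$-pathset of a two-terminal graph $G$ is a spanning subgraph of $G$ containing a path of length (number of edges) at most $d$ joining $s$ and $t$; $N_i^d(G)$ is the number of $d$-pathsets of $G$ with exactly $i$ edges. For $G,H\in T_{n,m}$, $H$ is $d$-stronger than $G$ if $N_i^d(H)\geq N_i^d(G)$ for every $i\in\{1,\ldots,m\}$ and $N_j^d(H)>N_j^d(G)$ for some $j\in\{1,\ldots,m\}$. *)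

From mathcomp Require Import all_boot.
Set Implicit Arguments. Unset Strict Implicit. Unset Printing Implicit Defensive.

(* A two-terminal graph on the vertex set 'I_n: an edge set E of
   2-element subsets of 'I_n, and two distinct terminals s, t. *)
Record ttgraph (n : nat) := TTGraph {
  tt_edges : {set {set 'I_n}};
  tt_s : 'I_n;
  tt_t : 'I_n }.

Definition tt_wf n (G : ttgraph n) : bool :=
  [forall x in tt_edges G, #|x| == 2] && (tt_s G != tt_t G).

(* G is in T_{n,m} (up to isomorphism): well-formed with m edges *)
Definition in_T n m (G : ttgraph n) : bool :=
  tt_wf G && (#|tt_edges G| == m).

Definition adj n (E : {set {set 'I_n}}) : rel 'I_n :=
  fun x y => [set x; y] \in E.

Definition degree n (E : {set {set 'I_n}}) (v : 'I_n) : nat :=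
  #|[set y | adj E v y]|.

(* the path is s :: p, with p a k-tuple of vertices, k <= d edges *)
Definition has_short_path n (F : {set {set 'I_n}}) (s t : 'I_n) (d : nat) : bool :=
  [exists k : 'I_d.+1, exists p : k.-tuple 'I_n,
    [&& path (adj F) s p, last s p == t & uniq (s :: p)]].

(* d-pathsets of G: spanning subgraphs (subsets of the edge set) *)
Definition is_pathset n (G : ttgraph n) (d : nat) (F : {set {set 'I_n}}) : bool :=
  (F \subset tt_edges G) && has_short_path F (tt_s G) (tt_t G) d.

Definition N n (d i : nat) (G : ttgraph n) : nat :=
  #|[set F : {set {set 'I_n}} | is_pathset G d F && (#|F| == i)]|.

(* H is d-stronger than G (both assumed in T_{n,m}) *)
Definition stronger n (d m : nat) (H G : ttgraph n) : Prop :=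
  (forall i, 1 <= i <= m -> N d i G <= N d i H) /\
  (exists j, 1 <= j <= m /\ N d j G < N d j H).

Definition del_edge n (G : ttgraph n) (x y : 'I_n) : ttgraph n :=
  TTGraph (tt_edges G :\ [set x; y]) (tt_s G) (tt_t G).

Definition complete n (G : ttgraph n) : Prop :=
  let c := connect (adj (tt_edges G)) in
  c (tt_s G) (tt_t G) /\
  forall x y, c (tt_s G) x -> c (tt_s G) y -> x != y -> adj (tt_edges G) x y.

(* Call an edge f of G redundant if deleting f from any d-pathset of G leaves a
   d-pathset; the pendant edge sv is one, since a path from s to t never visits v.
   Replacing a redundant edge f by a non-edge e maps the d-pathsets of G
   injectively and size-preservingly to those of the new graph H (F goes to
   F - f + e when f is in F), so N_i^d(G) <= N_i^d(H) for all i.  The inequality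
   is strict when e lies on an s-t path P of length at most d in H: the edge set
   of P is a d-pathset of H, but removing e from it disconnects s from t, so it
   is not an image.
   If v = t, every edge other than st is redundant and at most two swaps create
   a path s-x-t.  Otherwise, if st is not an edge, swap sv for st.  If it is,
   the component of s in G - sv is not a clique, which yields a non-edge e on a
   path of length at most 3: a neighbour a of s (a <> t) not adjacent to t gives
   s-a-t; a neighbour b of t (b <> s) not adjacent to s gives s-b-t; failing
   both, two non-adjacent neighbours x, y of s give s-x-y-t, and a vertex b at
   distance 2 from s, reached through a, gives s-a-b-t. *)

From mathcomp Require Import all_boot.
Set Implicit Arguments. Unset Strict Implicit. Unset Printing Implicit Defensive.

Section ShortPaths.
Variable n : nat.
Implicit Types (E F : {set {set 'I_n}}) (g : {set 'I_n}) (s t x y : 'I_n) (p : seq 'I_n).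

Lemma adjC E : symmetric (adj E).
Proof. by move=> x y; rewrite /adj setUC. Qed.

Lemma has_short_pathP F s t d :
  reflect (exists2 p, size p <= d & [/\ path (adj F) s p, last s p = t & uniq (s :: p)])
          (has_short_path F s t d).
Proof.
apply: (iffP existsP) => [[k /existsP[p /and3P[hp /eqP hl hu]]] | [p hd [hp hl hu]]].
  by exists (val p); [rewrite size_tuple -ltnS | split].
exists (Ordinal (hd : size p < d.+1)); apply/existsP; exists (in_tuple p).
by rewrite hp hl eqxx.
Qed.

Fixpoint path_edges x p : {set {set 'I_n}} :=
  if p is y :: p' then [set x; y] |: path_edges y p' else set0.

Lemma path_edges_cat x p1 y p2 :
  path_edges x (p1 ++ y :: p2) = path_edges x p1 :|: ([set last x p1; y] |: path_edges y p2).
Proof. by elim: p1 x => [|z p1 IH] x /=; rewrite ?set0U // IH setUA. Qed.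

Lemma path_adjE F x p : path (adj F) x p = (path_edges x p \subset F).
Proof. by elim: p x => [|y p IH] x /=; rewrite ?sub0set // IH subUset sub1set. Qed.

Lemma path_edges_vertices x p g : g \in path_edges x p -> {subset g <= x :: p}.
Proof.
elim: p x => [|y p IH] x //=; first by rewrite inE.
case/setU1P => [-> z | /IH sub z /sub]; rewrite !inE.
  by case/orP=> ->; rewrite ?orbT.
by move=> ->; rewrite orbT.
Qed.

Lemma path_edges_short_path x p d :
  size p <= d -> uniq (x :: p) -> has_short_path (path_edges x p) x (last x p) d.
Proof. by move=> hd hu; apply/has_short_pathP; exists p; rewrite ?path_adjE. Qed.

Lemma has_short_pathS F F' s t d :
  F \subset F' -> has_short_path F s t d -> has_short_path F' s t d.
Proof.
move=> sFF' /has_short_pathP[p hd [hp hl hu]]; apply/has_short_pathP; exists p => //.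
by split=> //; rewrite path_adjE (subset_trans _ sFF') -?path_adjE.
Qed.

Lemma has_short_path_cut F (S : {set 'I_n}) s t d :
  s \in S -> t \notin S -> {in F, forall g, (g \subset S) || (g \subset ~: S)} ->
  ~~ has_short_path F s t d.
Proof.
move=> sS tS cut; apply/negP => /has_short_pathP[p _ [hp hl _]].
have closedS : closed (adj F) S.
  move=> x y /cut /orP[] /subsetP sub.
    by rewrite (sub x (set21 x y)) (sub y (set22 x y)).
  by move: (sub x (set21 x y)) (sub y (set22 x y)); rewrite !inE => /negbTE-> /negbTE->.
have := closed_connect closedS (introT connectP (ex_intro2 _ _ p hp (esym hl))).
by rewrite sS (negbTE tS).
Qed.

Lemma path_edges_cut x p1 y p2 d :
  uniq (x :: p1 ++ y :: p2) ->
  ~~ has_short_path (path_edges x (p1 ++ y :: p2) :\ [set last x p1; y]) x (last y p2) d.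
Proof.
rewrite -cat_cons cat_uniq => /and3P[_ /hasPn disj _].
have outside z : z \in y :: p2 -> z \in ~: [set z in x :: p1].
  by move=> /disj; rewrite !inE.
apply: (has_short_path_cut (S := [set z in x :: p1])).
- by rewrite inE mem_head.
- by have := outside _ (mem_last y p2); rewrite in_setC.
move=> g; rewrite path_edges_cat !inE => /andP[ne /or3P[gl | ge | gr]].
- by apply/orP; left; apply/subsetP => z /(path_edges_vertices gl); rewrite in_set.
- by rewrite ge in ne.
- by apply/orP; right; apply/subsetP => z /(path_edges_vertices gr) /outside.
Qed.
End ShortPaths.

Definition redundant_edge n (E : {set {set 'I_n}}) (s t : 'I_n) (d : nat) (f : {set 'I_n}) :=
  forall F : {set {set 'I_n}},
    F \subset E -> has_short_path F s t d -> has_short_path (F :\ f) s t d.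

Section EdgeSwap.
Variables (n d : nat) (s t : 'I_n) (E : {set {set 'I_n}}) (f e : {set 'I_n}).
Hypotheses (fE : f \in E) (eE : e \notin E) (f_redundant : redundant_edge E s t d f).
Implicit Types (F K : {set {set 'I_n}}).

Local Notation G := (TTGraph E s t).
Local Notation H := (TTGraph (e |: (E :\ f)) s t).
Let pathsets (X : ttgraph n) i := [set F | is_pathset X d F && (#|F| == i)].
Let swap F := if f \in F then e |: (F :\ f) else F.
Let unswap F := if e \in F then f |: (F :\ e) else F.

Let pathsets_sub F i : F \in pathsets G i -> F \subset E.
Proof. by rewrite inE => /andP[/andP[]]. Qed.

Let notin_sub F : F \subset E -> e \notin F.
Proof. by move=> sFE; apply: contra eE; apply: (subsetP sFE). Qed.

Lemma swapK i : {in pathsets G i, cancel swap unswap}.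
Proof.
move=> F /pathsets_sub /notin_sub eF; rewrite /swap /unswap.
case fF: (f \in F); last by rewrite (negbTE eF).
by rewrite setU11 setU1K ?setD1K // in_setD1 (negbTE eF) andbF.
Qed.

Lemma swap_pathsets i : swap @: pathsets G i \subset pathsets H i.
Proof.
apply/subsetP => _ /imsetP[F + ->]; rewrite !inE /is_pathset /=.
case/andP=> /andP[sFE hF] /eqP <-; rewrite /swap; case: ifP => fF.
  have eF : e \notin F :\ f by rewrite in_setD1 (negbTE (notin_sub sFE)) andbF.
  rewrite setUS ?setSD // (has_short_pathS (subsetUr _ _) (f_redundant sFE hF)).
  by rewrite cardsU1 eF (cardsD1 f F) fF eqxx.
by rewrite eqxx hF !andbT; apply: subsetU; rewrite subsetD1 sFE fF orbT.
Qed.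

Lemma N_swap_le i : N d i G <= N d i H.
Proof.
by rewrite /N -(card_in_imset (can_in_inj (@swapK i))) subset_leq_card ?swap_pathsets.
Qed.

Lemma N_swap_lt K :
  K \subset e |: (E :\ f) -> e \in K -> has_short_path K s t d ->
  ~~ has_short_path (K :\ e) s t d -> N d #|K| G < N d #|K| H.
Proof.
move=> sKH eK hK nK.
have KH : K \in pathsets H #|K| by rewrite inE /is_pathset sKH hK eqxx.
rewrite /N -/(pathsets G _) -/(pathsets H _) (cardsD1 K (pathsets H _)) KH add1n ltnS.
rewrite -(card_in_imset (can_in_inj (@swapK _))) subset_leq_card //.
rewrite subsetD1 swap_pathsets; apply/imsetP => -[F FG KF].
move: eK nK; rewrite KF /swap; case: ifP => fF; last first.
  by move=> eF; have := notin_sub (pathsets_sub FG); rewrite eF.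
rewrite setU1K; last by rewrite in_setD1 (negbTE (notin_sub (pathsets_sub FG))) andbF.
by move: FG; rewrite inE /is_pathset => /andP[/andP[sFE hF] _] _; rewrite f_redundant.
Qed.

Lemma in_T_swap m : in_T m G -> #|e| == 2 -> in_T m H.
Proof.
rewrite /in_T /tt_wf /= => /andP[/andP[wf ->] /eqP <-] e2; rewrite andbT; apply/andP; split.
  apply/forallP => g; apply/implyP; rewrite !inE => /orP[/eqP -> // | /andP[_ gE]].
  by have := forallP wf g; rewrite gE.
by rewrite cardsU1 in_setD1 (negbTE eE) andbF (cardsD1 f E) fE.
Qed.

End EdgeSwap.

Lemma set2_neq (T : finType) (a b c d : T) : b != c -> b != d -> [set a; b] != [set c; d].
Proof.
by move=> bc bd; apply/eqP => /setP /(_ b); rewrite !inE eqxx orbT (negbTE bc) (negbTE bd).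
Qed.

Lemma connect_exit (T : finType) (r : rel T) (P : pred T) x z :
  P x -> ~~ P z -> connect r x z -> exists y w, [/\ P y, r y w & ~~ P w].
Proof.
move=> Px nPz /connectP[p hp zl]; subst z.
elim: p x Px hp nPz => [|y p IH] x Px /=; first by rewrite Px.
case/andP=> rxy hp; have [Py | nPy] := boolP (P y); first exact: IH.
by exists x, y.
Qed.

Section TwoTerminalGraphs.
Variables (n m d : nat).
Implicit Types (E : {set {set 'I_n}}) (G H : ttgraph n) (s t v x y : 'I_n).

Lemma in_T_terminals G : in_T m G -> tt_s G != tt_t G.
Proof. by case/andP=> /andP[]. Qed.

Lemma in_T_adj_neq G x y : in_T m G -> adj (tt_edges G) x y -> x != y.
Proof.
case/andP=> /andP[/forallP /(_ [set x; y]) + _ _] xy.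
by move: xy; rewrite /adj => ->; rewrite cards2; case: (x != y).
Qed.

Lemma in_T_card G : in_T m G -> #|tt_edges G| = m.
Proof. by case/andP=> _ /eqP. Qed.

Lemma in_T_edge_avoiding (A : {set {set 'I_n}}) G :
  in_T m G -> #|A| < m -> exists2 f, f \in tt_edges G & f \notin A.
Proof.
move=> hT ltA; apply/subsetPn; apply: contraL ltA => /subset_leq_card.
by rewrite -leqNgt (in_T_card hT).
Qed.

Lemma degree1_neighbour E v s : degree E v = 1 -> adj E v s -> forall y, adj E v y -> y = s.
Proof.
rewrite /degree => /eqP /cards1P[z hz] vs y vy.
have : y \in [set z] by rewrite -hz inE.
have : s \in [set z] by rewrite -hz inE.
by rewrite !in_set1 => /eqP -> /eqP ->.
Qed.

Lemma stronger_le_trans G G' H :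
  (forall i, N d i G <= N d i G') -> stronger d m H G' -> stronger d m H G.
Proof.
move=> le [geH [j [hj ltj]]]; split => [i hi | ]; first exact: leq_trans (le i) (geH i hi).
by exists j; split => //; apply: leq_ltn_trans (le j) ltj.
Qed.

Lemma stronger_of_swap E s t f p1 b p2 :
  in_T m (TTGraph E s t) -> f \in E -> redundant_edge E s t d f ->
  [set last s p1; b] \notin E -> uniq (s :: p1 ++ b :: p2) -> last b p2 = t ->
  size (p1 ++ b :: p2) <= d -> path (adj ([set last s p1; b] |: (E :\ f))) s (p1 ++ b :: p2) ->
  exists H, in_T m H /\ stronger d m H (TTGraph E s t).
Proof.
move=> hT fE red eE hu hl hd hp.
set e := [set last s p1; b]; set K := path_edges s (p1 ++ b :: p2).
have e2 : #|e| == 2.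
  move: hu; rewrite cards2 -cat_cons cat_uniq => /and3P[_ /hasPn /(_ b (mem_head _ _)) bn _].
  by case: (last s p1 =P b) bn => // <-; rewrite mem_last.
have hTH := in_T_swap fE eE hT e2.
have sKH : K \subset e |: (E :\ f) by rewrite -path_adjE.
have eK : e \in K by rewrite /K path_edges_cat !inE eqxx orbT.
have hK : has_short_path K s t d.
  have -> : t = last s (p1 ++ b :: p2) by rewrite last_cat /= hl.
  exact: path_edges_short_path.
have nK : ~~ has_short_path (K :\ e) s t d by rewrite -hl; apply: path_edges_cut.
exists (TTGraph (e |: (E :\ f)) s t); split => //; split => [i _ | ]; first exact: N_swap_le.
exists #|K|; split; last exact: N_swap_lt.
apply/andP; split; first by apply/card_gt0P; exists e.
by rewrite -(in_T_card hTH) subset_leq_card.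
Qed.

End TwoTerminalGraphs.

Section PendantEdges.
Variables (n d : nat) (E : {set {set 'I_n}}) (s t : 'I_n).

Lemma pendant_redundant v :
  v != s -> v != t -> (forall y, adj E v y -> y = s) -> redundant_edge E s t d [set s; v].
Proof.
move=> vs vt nb_v F sFE /has_short_pathP[p hd [hp hl hu]]; apply/has_short_pathP.
exists p => //; split => //; rewrite path_adjE subsetD1 -path_adjE hp /=.
apply/negP => /path_edges_vertices /(_ v (set22 s v)); rewrite inE (negbTE vs) /= => vp.
case/splitPr: vp hp hl hu => p1 p2; rewrite cat_path last_cat /= => /and3P[_ _].
case: p2 => [_ vt' | w p2 /andP[/(subsetP sFE) /nb_v -> _] _]; first by move: vt; rewrite -vt' eqxx.
by rewrite /= mem_cat !inE eqxx !orbT.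
Qed.

Lemma pendant_terminal_redundant f :
  s != t -> 0 < d -> (forall y, adj E t y -> y = s) -> f != [set s; t] ->
  redundant_edge E s t d f.
Proof.
move=> st d_gt0 nb_t fst F sFE /has_short_pathP[p _ [hp hl _]].
have stF : [set s; t] \in F.
  case/lastP: p hp hl => [_ ts | q y]; first by move: st; rewrite -ts eqxx.
  rewrite rcons_path last_rcons => /andP[_ qy] yt; subst y.
  have qs : last s q = s by apply: nb_t; rewrite adjC; apply: (subsetP sFE).
  by rewrite -qs.
apply/has_short_pathP; exists [:: t] => //=.
by rewrite /adj in_setD1 stF eq_sym fst inE st.
Qed.

End PendantEdges.

Section PendantTerminal.
Variables (n m d : nat).
Hypotheses (d2 : 1 < d) (m3 : 2 < m).
Implicit Types (E : {set {set 'I_n}}) (s t x : 'I_n).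

Lemma pendant_terminal_neighbour_stronger E s t x :
  in_T m (TTGraph E s t) -> (forall y, adj E t y -> y = s) -> adj E s t ->
  adj E s x -> x != t -> exists H, in_T m H /\ stronger d m H (TTGraph E s t).
Proof.
move=> hT nb_t st_adj sx xt.
have st : s != t := in_T_terminals hT; have sx_neq := in_T_adj_neq hT sx.
have [f fE] : exists2 f, f \in E & f \notin [set [set s; t]; [set s; x]].
  by apply: in_T_edge_avoiding hT _; apply: leq_ltn_trans m3; rewrite cards2 ltnS leq_b1.
rewrite !inE negb_or => /andP[fst fsx].
have xtE : [set x; t] \notin E.
  by apply: contra sx_neq => xtE; apply/eqP; rewrite (nb_t x) // adjC.
apply: (stronger_of_swap (p1 := [:: x]) (p2 := [::]) hT fE _ xtE) => //=.
- by apply: pendant_terminal_redundant; rewrite ?(ltnW d2).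
- by rewrite !inE negb_or sx_neq st xt.
- by rewrite /adj setU11 andbT setU1r // in_setD1 eq_sym fsx.
Qed.

Lemma pendant_terminal_stronger E s t :
  in_T m (TTGraph E s t) -> (forall y, adj E t y -> y = s) -> adj E t s ->
  exists H, in_T m H /\ stronger d m H (TTGraph E s t).
Proof.
move=> hT nb_t ts; have st_adj : adj E s t by rewrite adjC.
have [/existsP[x /andP[sx xt]] | /existsPn no_x] := boolP [exists x, adj E s x && (x != t)].
  exact: pendant_terminal_neighbour_stronger sx xt.
have st : s != t := in_T_terminals hT.
have [f fE] : exists2 f, f \in E & f \notin [set [set s; t]].
  by apply: in_T_edge_avoiding hT _; rewrite cards1 ltnW.
rewrite inE => fst.
have /cards2P[x [y [xy fxy]]] : #|f| == 2.
  by case/andP: hT => /andP[/forallP /(_ f)]; rewrite fE.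
have xs : x != s.
  apply/eqP => xs; have := no_x y; rewrite -xs /adj -fxy fE /=.
  by move/negPn/eqP => yt; move: fst; rewrite fxy xs yt eqxx.
have xt : x != t.
  apply: contraNneq fst => xt; have ys : y = s by apply: nb_t; rewrite /adj -xt -fxy.
  by rewrite fxy xt ys setUC.
have sxE : [set s; x] \notin E by have := no_x x; rewrite xt andbT.
have [hT1 N_le] : in_T m (TTGraph ([set s; x] |: (E :\ f)) s t) /\
                  forall i, N d i (TTGraph E s t) <= N d i (TTGraph ([set s; x] |: (E :\ f)) s t).
  have red : redundant_edge E s t d f.
    by apply: pendant_terminal_redundant; rewrite ?(ltnW d2).
  split; first by apply: (in_T_swap fE sxE hT); rewrite cards2 (eq_sym s x) xs.
  by move=> i; apply: (N_swap_le sxE red).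
have nb_t1 y' : adj ([set s; x] |: (E :\ f)) t y' -> y' = s.
  have ne : [set y'; t] != [set s; x] by apply: set2_neq; rewrite eq_sym.
  rewrite /adj in_setU1 in_setD1 setUC (negbTE ne) /= => /andP[_].
  by rewrite setUC => /nb_t.
have st1 : adj ([set s; x] |: (E :\ f)) s t by rewrite /adj setU1r // in_setD1 eq_sym fst.
have [H [hTH stronger_H]] := pendant_terminal_neighbour_stronger hT1 nb_t1 st1 (setU11 _ _) xt.
by exists H; split => //; apply: stronger_le_trans stronger_H.
Qed.

End PendantTerminal.

Section PendantNeighbour.
Variables (n m d : nat) (E : {set {set 'I_n}}) (s t v : 'I_n).
Hypotheses (hT : in_T m (TTGraph E s t)) (d3 : 2 < d).
Hypotheses (vs : v != s) (vt : v != t) (nb_v : forall y, adj E v y -> y = s).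
Hypotheses (sv : adj E s v) (st_adj : adj E s t).

Local Notation E' := (E :\ [set s; v]).
Local Notation nbhd_s := [pred z | (z == s) || adj E' s z].
Implicit Types (a b x y : 'I_n).

Let st : s != t := in_T_terminals hT.

Let adj'_neq a b : adj E' a b -> a != b.
Proof. by rewrite /adj in_setD1 => /andP[_]; apply: in_T_adj_neq hT. Qed.

Let adj'_neq_v a b : adj E' a b -> a != v.
Proof.
apply: contraTneq => ->; rewrite /adj in_setD1 negb_and negbK.
have [vbE | ] := boolP ([set v; b] \in E); last by rewrite orbT.
by rewrite (nb_v vbE) setUC eqxx.
Qed.

Let st' : adj E' s t.
Proof.
rewrite /adj in_setD1 (st_adj : [set s; t] \in E) andbT.
by apply: set2_neq; rewrite eq_sym.
Qed.

Lemma stronger_of_pendant_swap p1 b p2 :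
  ~~ adj E' (last s p1) b -> last s p1 != v -> b != v ->
  uniq (s :: p1 ++ b :: p2) -> last b p2 = t -> size (p1 ++ b :: p2) <= 3 ->
  path (adj ([set last s p1; b] |: E')) s (p1 ++ b :: p2) ->
  exists H, in_T m H /\ stronger d m H (TTGraph E s t).
Proof.
move=> nab av bv hu hl hsz hp.
apply: (stronger_of_swap hT _ (pendant_redundant vs vt nb_v) _ hu hl (leq_trans hsz d3) hp).
  exact: sv.
apply: contra nab => abE; rewrite /adj in_setD1 abE andbT eq_sym.
by apply: set2_neq; rewrite eq_sym.
Qed.

Lemma stronger_of_s_neighbour a :
  adj E' s a -> a != t -> ~~ adj E' a t -> exists H, in_T m H /\ stronger d m H (TTGraph E s t).
Proof.
move=> sa at_neq n_at.
apply: (stronger_of_pendant_swap (p1 := [:: a]) (b := t) (p2 := [::])) => //=.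
- by apply: (@adj'_neq_v a s); rewrite adjC.
- by rewrite eq_sym.
- by rewrite !inE negb_or (adj'_neq sa) st at_neq.
- by rewrite /adj setU11 setU1r.
Qed.

Lemma stronger_of_t_neighbour b :
  adj E' t b -> b != s -> ~~ adj E' s b -> exists H, in_T m H /\ stronger d m H (TTGraph E s t).
Proof.
move=> tb bs nsb.
apply: (stronger_of_pendant_swap (p1 := [::]) (b := b) (p2 := [:: t])) => //=.
- by rewrite eq_sym.
- by apply: (@adj'_neq_v _ t); rewrite adjC.
- by rewrite !inE negb_or eq_sym bs st eq_sym (adj'_neq tb).
- by rewrite /adj setU11 setU1r // setUC.
Qed.

Lemma stronger_of_nonadj_pair x y :
  (forall a, adj E' s a -> a != t -> adj E' a t) ->
  x \in nbhd_s -> y \in nbhd_s -> x != y -> ~~ adj E' x y ->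
  exists H, in_T m H /\ stronger d m H (TTGraph E s t).
Proof.
move=> to_t; rewrite !inE => nx ny xy nxy.
have xs : x != s.
  apply: contraNneq nxy => xs; case/orP: ny => [/eqP ys | ]; last by rewrite xs.
  by move: xy; rewrite xs ys eqxx.
have ys : y != s.
  apply: contraNneq nxy => ys; case/orP: nx => [/eqP xs' | ]; last by rewrite ys adjC.
  by move: xs; rewrite xs' eqxx.
have sx : adj E' s x by case/orP: nx => //; rewrite (negbTE xs).
have sy : adj E' s y by case/orP: ny => //; rewrite (negbTE ys).
have xt : x != t.
  apply: contraNneq nxy => xt; have yt : y != t by rewrite -xt eq_sym.
  by rewrite adjC xt to_t.
have yt : y != t by apply: contraNneq nxy => ->; rewrite to_t.
apply: (stronger_of_pendant_swap (p1 := [:: x]) (b := y) (p2 := [:: t])) => //=.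
- by apply: (@adj'_neq_v _ s); rewrite adjC.
- by apply: (@adj'_neq_v _ s); rewrite adjC.
- by rewrite !inE !negb_or (adj'_neq sx) (adj'_neq sy) st xy xt yt.
- by rewrite /adj setU11 !setU1r //; apply: to_t.
Qed.

Lemma stronger_of_far_vertex a b :
  (forall b, adj E' t b -> b != s -> adj E' s b) ->
  a \in nbhd_s -> adj E' a b -> b \notin nbhd_s ->
  exists H, in_T m H /\ stronger d m H (TTGraph E s t).
Proof.
move=> from_t; rewrite !inE negb_or => na ab /andP[bs nsb].
have sa : adj E' s a.
  by case/orP: na => // /eqP as_; rewrite as_ in ab; rewrite ab in nsb.
have at_neq : a != t by apply: contraNneq nsb => at_eq; rewrite from_t // -at_eq.
have bt : b != t by apply: contraNneq nsb => ->.
have nbt : ~~ adj E' b t by apply: contra nsb => bt'; rewrite from_t // adjC.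
apply: (stronger_of_pendant_swap (p1 := [:: a; b]) (b := t) (p2 := [::])) => //=.
- by apply: (@adj'_neq_v _ a); rewrite adjC.
- by rewrite eq_sym.
- by rewrite !inE !negb_or (adj'_neq sa) (eq_sym s b) bs st (adj'_neq ab) at_neq bt.
- by rewrite /adj setU11 !setU1r.
Qed.

Lemma stronger_of_noncomplete :
  ~ complete (TTGraph E' s t) -> exists H, in_T m H /\ stronger d m H (TTGraph E s t).
Proof.
move=> not_complete.
have [x [y [sx sy xy nxy]]] : exists x y,
    [/\ connect (adj E') s x, connect (adj E') s y, x != y & ~~ adj E' x y].
  have [clique | ] := boolP [forall x, forall y,
    [&& connect (adj E') s x, connect (adj E') s y & x != y] ==> adj E' x y].
    case: not_complete; split=> [|x y sx sy xy]; first exact: connect1 st'.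
    by have /forallP /(_ y) := forallP clique x; rewrite sx sy xy.
  case/forallPn=> x /forallPn[y]; rewrite negb_imply => /andP[/and3P[sx sy xy] nxy].
  by exists x, y.
have [/existsP[a /and3P[]] | /existsPn to_t] :=
  boolP [exists a, [&& adj E' s a, a != t & ~~ adj E' a t]].
  exact: stronger_of_s_neighbour.
have [/existsP[b /and3P[]] | /existsPn from_t] :=
  boolP [exists b, [&& adj E' t b, b != s & ~~ adj E' s b]].
  exact: stronger_of_t_neighbour.
have {}to_t a : adj E' s a -> a != t -> adj E' a t.
  by move=> sa at_neq; have := to_t a; rewrite sa at_neq negbK.
have {}from_t b : adj E' t b -> b != s -> adj E' s b.
  by move=> tb bs; have := from_t b; rewrite tb bs negbK.
have [/andP[nx ny] | ] := boolP ((x \in nbhd_s) && (y \in nbhd_s)).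
  exact: stronger_of_nonadj_pair nx ny xy nxy.
rewrite negb_and => /orP out.
have [z sz nz] : exists2 z, connect (adj E') s z & z \notin nbhd_s.
  by case: out; [exists x | exists y].
have sN : s \in nbhd_s by rewrite inE eqxx.
have [a [b [na ab nb]]] := connect_exit sN nz sz.
exact: stronger_of_far_vertex na ab nb.
Qed.

End PendantNeighbour.

Theorem lemma6 (n m d : nat) (G : ttgraph n) (v : 'I_n) :
  5 <= n -> 5 <= m -> 3 <= d ->
  in_T m G ->
  degree (tt_edges G) v = 1 -> adj (tt_edges G) v (tt_s G) ->
  ~ complete (del_edge G (tt_s G) v) ->
  exists H : ttgraph n, in_T m H /\ stronger d m H G.
Proof.
case: G => E s t /= _ m5 d3 hT deg_v vs_adj not_complete.
have nb_v := degree1_neighbour deg_v vs_adj.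
have m3 : 2 < m := leq_trans (isT : 3 <= 5) m5.
have [vt | vt] := eqVneq v t.
  by subst v; apply: (pendant_terminal_stronger (ltnW d3) m3 hT nb_v vs_adj).
have vs : v != s := in_T_adj_neq hT vs_adj.
have sv : adj E s v by rewrite adjC.
have [st_adj | st_nadj] := boolP (adj E s t).
  exact: (stronger_of_noncomplete hT d3 vs vt nb_v sv st_adj not_complete).
apply: (stronger_of_swap (p1 := [::]) (b := t) (p2 := [::]) hT sv
          (pendant_redundant vs vt nb_v) st_nadj) => //=.
- by rewrite inE (in_T_terminals hT).
- exact: leq_trans _ d3.
- by rewrite /adj setU11.
Qed.
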